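(* Let $\mathcal{T}=(Q,E,I,F,f)$ be a transducer that does not satisfy the weak twinning property. Then there exist states $q_1,q_2$, words $u,v\in\Sigma^*$ and $u_1,u_2,v_1,v_2\in\Gamma^*$ with runs $q_1\xrightarrow{u\mid u_1}q_1\xrightarrow{v\mid v_1}q_1\xrightarrow{u\mid u_2}q_2\xrightarrow{v\mid v_2}q_2$ such that for every $n\in\mathbb{N}$, $|\Delta(u_1v_1^n,u_2v_2^n)|\ge n$.
   Context: A transducer has finite state set $Q$, initial states $I$, final states $F$, transitions $E\subseteq Q\times\Sigma\times\Gamma^*\times Q$ and final output $f:F\to\Gamma^*$. We write $p\xrightarrow{u\mid w}q$ if there is a run from $p$ to $q$ reading $u$ and outputting $w$. $\Delta(v,w)=v^{-1}w$ is computed in the free group over $\Gamma$, and $|\cdot|$ of a free-group element is the length of its reduced word over $\Gamma\cup\Gamma^{-1}$. The transducer satisfies the weak twinning property if for all states $q_1,q_2$, all $u,v\in\Sigma^*$ and $u_1,u_2,v_1,v_2\in\Gamma^*$ with $q_1\xrightarrow{u\mid u_1}q_1$, $q_1\xrightarrow{v\mid v_1}q_1$, $q_1\xrightarrow{u\mid u_2}q_2$, $q_2\xrightarrow{v\mid v_2}q_2$, one has $\Delta(u_1,u_2)=\Delta(u_1v_1,u_2v_2)$. *)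

From mathcomp Require Import all_boot.
Set Implicit Arguments. Unset Strict Implicit. Unset Printing Implicit Defensive.

Record transducer (Q Sigma Gamma : finType) := Transducer {
  trans  : seq (Q * Sigma * seq Gamma * Q);
  init   : {set Q};
  final  : {set Q};
  fout   : Q -> seq Gamma                      (* f (only meaningful on F) *)
}.

Inductive run (Q Sigma Gamma : finType) (T : transducer Q Sigma Gamma)
  : Q -> seq Sigma -> seq Gamma -> Q -> Prop :=
| run_nil p : run T p [::] [::] p
| run_cons p a x r u w q :
    (p, a, x, r) \in trans T -> run T r u w q -> run T p (a :: u) (x ++ w) q.

(* Free group over Gamma: words over Gamma ∪ Gamma^{-1}; a letter (b, g)
   stands for g if b = true and g^{-1} if b = false. *)
Definition fletter (Gamma : finType) := (bool * Gamma)%type.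

Definition fg_reduce (Gamma : finType) (s : seq (fletter Gamma)) : seq (fletter Gamma) :=
  foldr (fun x acc => match acc with
                      | y :: t => if (y.2 == x.2) && (y.1 != x.1) then t else x :: acc
                      | [::] => [:: x]
                      end) [::] s.

Definition pos_word (Gamma : finType) (w : seq Gamma) : seq (fletter Gamma) :=
  [seq (true, g) | g <- w].

Definition fg_inv (Gamma : finType) (s : seq (fletter Gamma)) : seq (fletter Gamma) :=
  rev [seq (~~ x.1, x.2) | x <- s].

Definition Delta (Gamma : finType) (v w : seq Gamma) : seq (fletter Gamma) :=
  fg_reduce (fg_inv (pos_word v) ++ pos_word w).

Definition fg_len (Gamma : finType) (x : seq (fletter Gamma)) : nat := size (fg_reduce x).

Definition wpow (A : Type) (w : seq A) (n : nat) : seq A := flatten (nseq n w).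

Definition weak_twinning (Q Sigma Gamma : finType) (T : transducer Q Sigma Gamma) : Prop :=
  forall (q1 q2 : Q) (u v : seq Sigma) (u1 u2 v1 v2 : seq Gamma),
    run T q1 u u1 q1 -> run T q1 v v1 q1 ->
    run T q1 u u2 q2 -> run T q2 v v2 q2 ->
    Delta u1 u2 = Delta (u1 ++ v1) (u2 ++ v2).

From mathcomp Require Import all_boot zify.
From Stdlib Require Import Classical.

Set Implicit Arguments.
Unset Strict Implicit.
Unset Printing Implicit Defensive.

(* A pair of positive words (s, t) has Delta s t = s'^{-1} t', where s', t' are
   what remains of s, t after removing their longest common prefix; hence
   |Delta s t| = |s| + |t| - 2 lcp s t.  If a failure of the weak twinning
   property is witnessed by loops with outputs v1, v2, then either
   |v1| <> |v2| and the lengths of u1 v1^n and u2 v2^n drift apart linearly, or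
   |v1| = |v2| and lcp (u1 v1^n) (u2 v2^n) stays bounded: a long common prefix
   forces u2 = u1 w and v1 w = w v2 (or symmetrically), which makes
   Delta (u1 v1) (u2 v2) = w = Delta u1 u2.  Either way |Delta| >= n - C, and
   replacing the loop v by v^(C+1) absorbs the constant C. *)

Section Powers.
Variable A : Type.
Implicit Types w : seq A.

Lemma wpowS w n : wpow w n.+1 = w ++ wpow w n.
Proof. by []. Qed.

Lemma wpowSr w n : wpow w n.+1 = wpow w n ++ w.
Proof.
elim: n => [|n IHn]; first by rewrite wpowS cats0.
by rewrite wpowS [in LHS]IHn catA.
Qed.

Lemma wpowD w m n : wpow w (m + n) = wpow w m ++ wpow w n.
Proof. by elim: m => // m IHm; rewrite addSn !wpowS IHm catA. Qed.

Lemma wpowM w k n : wpow (wpow w k) n = wpow w (n * k).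
Proof. by elim: n => // n IHn; rewrite wpowS IHn mulSn wpowD. Qed.

Lemma size_wpow w n : size (wpow w n) = n * size w.
Proof. by elim: n => // n IHn; rewrite wpowS size_cat IHn mulSn. Qed.

(* [w^n] is a prefix of [w^(n+1) = w w^n]. *)
Lemma take_wpow_shift w n m :
  size w + m <= n * size w ->
  take (size w + m) (wpow w n) = w ++ take m (wpow w n).
Proof.
move=> len; rewrite -(@takel_cat _ _ _ w) ?size_wpow // -wpowSr wpowS.
by rewrite takeD take_size_cat // drop_size_cat.
Qed.

End Powers.

Section LongestCommonPrefix.
Variable T : eqType.
Implicit Types s t w : seq T.

Fixpoint lcp s t : nat :=
  match s, t with
  | x :: s', y :: t' => if x == y then (lcp s' t').+1 else 0
  | _, _ => 0
  end.

Lemma lcpC s t : lcp s t = lcp t s.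
Proof. by elim: s t => [|x s IHs] [|y t] //=; rewrite eq_sym IHs. Qed.

Lemma lcp_leq_size s t : lcp s t <= size s.
Proof. by elim: s t => [|x s IHs] [|y t] //=; case: ifP => // _; apply: IHs. Qed.

Lemma take_lcp k s t : k <= lcp s t -> take k s = take k t.
Proof.
elim: s t k => [|x s IHs] [|y t] [|k] //=.
by case: eqP => // -> /IHs ->.
Qed.

Lemma lcp_drop_lcp s t : lcp (drop (lcp s t) s) (drop (lcp s t) t) = 0.
Proof.
elim: s t => [|x s IHs] [|y t] //=.
by case: eqP => [_|/eqP/negbTE] /=; last move=> ->.
Qed.

Lemma lcp_catr s w : lcp s (s ++ w) = size s.
Proof. by elim: s => //= x s ->; rewrite eqxx. Qed.

Lemma lcp_catl s w : lcp (s ++ w) s = size s.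
Proof. by rewrite lcpC lcp_catr. Qed.

End LongestCommonPrefix.

Section DeltaOfPositiveWords.
Variable G : finType.
Implicit Types s t w : seq G.

Definition reduce_step (x : fletter G) (acc : seq (fletter G)) :=
  match acc with
  | y :: r => if (y.2 == x.2) && (y.1 != x.1) then r else x :: acc
  | [::] => [:: x]
  end.

Lemma fg_reduce_cat (a b : seq (fletter G)) :
  fg_reduce (a ++ b) = foldr reduce_step (fg_reduce b) a.
Proof. exact: foldr_cat. Qed.

Lemma fg_reduce_pos w : fg_reduce (pos_word w) = pos_word w.
Proof.
elim: w => // x w IHw.
rewrite (_ : pos_word _ = [:: (true, x)] ++ pos_word w) // fg_reduce_cat IHw.
by case: w {IHw} => //= y w; rewrite andbF.
Qed.

Lemma fg_inv_pos_cons x w :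
  fg_inv (pos_word (x :: w)) = fg_inv (pos_word w) ++ [:: (false, x)].
Proof. by rewrite /fg_inv /= rev_cons cats1. Qed.

Lemma reduce_inv_pos_neg w z (r : seq (fletter G)) :
  foldr reduce_step ((false, z) :: r) (fg_inv (pos_word w))
  = fg_inv (pos_word w) ++ (false, z) :: r.
Proof.
elim: w z r => //= x w IHw z r.
by rewrite fg_inv_pos_cons foldr_cat /= andbF IHw -catA.
Qed.

Lemma reduce_inv_pos_pos s t :
  foldr reduce_step (pos_word t) (fg_inv (pos_word s))
  = fg_inv (pos_word (drop (lcp s t) s)) ++ pos_word (drop (lcp s t) t).
Proof.
elim: s t => [|x s IHs] [|y t] //; rewrite fg_inv_pos_cons foldr_cat.
- rewrite [lcp _ _]/= [foldr _ (pos_word [::]) _]/=.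
  by rewrite reduce_inv_pos_neg !drop0 cats0.
- rewrite [lcp _ _]/=; have [<-|neq_xy] := eqVneq x y.
    by rewrite /= eqxx; apply: IHs.
  rewrite [foldr _ _ [:: _]]/= eq_sym (negbTE neq_xy) /=.
  by rewrite reduce_inv_pos_neg (fg_inv_pos_cons x s) -catA.
Qed.

Lemma DeltaE s t :
  Delta s t = fg_inv (pos_word (drop (lcp s t) s)) ++ pos_word (drop (lcp s t) t).
Proof. by rewrite /Delta fg_reduce_cat fg_reduce_pos reduce_inv_pos_pos. Qed.

Lemma fg_reduce_Delta s t : fg_reduce (Delta s t) = Delta s t.
Proof.
by rewrite {1}DeltaE -/(Delta _ _) DeltaE lcp_drop_lcp !drop0 -DeltaE.
Qed.

Lemma fg_len_Delta s t : fg_len (Delta s t) = size s + size t - 2 * lcp s t.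
Proof.
rewrite /fg_len fg_reduce_Delta DeltaE size_cat size_rev !size_map !size_drop.
have le_s : lcp s t <= size s := lcp_leq_size s t.
have le_t : lcp s t <= size t by rewrite lcpC lcp_leq_size.
lia.
Qed.

Lemma Delta_catr s w : Delta s (s ++ w) = pos_word w.
Proof. by rewrite DeltaE lcp_catr drop_size drop_size_cat. Qed.

Lemma Delta_catl s w : Delta (s ++ w) s = fg_inv (pos_word w).
Proof. by rewrite DeltaE lcp_catl drop_size drop_size_cat ?cats0. Qed.

End DeltaOfPositiveWords.

Lemma eq_take_cat_wpow_conj (T : Type) (u1 u2 v1 v2 : seq T) N :
  size v1 = size v2 -> 0 < N -> size u1 <= size u2 ->
  size u2 + size v1 <= size u1 + N * size v1 ->
  take (size u2 + size v1) (u1 ++ wpow v1 N) =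
    take (size u2 + size v1) (u2 ++ wpow v2 N) ->
  exists2 w, u2 = u1 ++ w & u2 ++ v2 = u1 ++ v1 ++ w.
Proof.
move=> eq_v N_gt0 le_u len eq_take.
exists (take (size u2 - size u1) (wpow v1 N)).
  have := congr1 (take (size u2)) eq_take.
  rewrite !take_takel ?leq_addr // (take_size_cat _ (erefl (size u2))).
  rewrite -[in take (size u2) _](subnKC le_u) takeD take_size_cat //.
  by rewrite drop_size_cat // => ->.
have -> : u2 ++ v2 = take (size u2 + size v1) (u2 ++ wpow v2 N).
  rewrite eq_v takeD take_size_cat // drop_size_cat //.
  by rewrite -(prednK N_gt0) wpowS take_size_cat.
rewrite -eq_take -[in take (size u2 + _) _](subnKC le_u) -addnA [_ - _ + _]addnC.
rewrite takeD take_size_cat // drop_size_cat // take_wpow_shift //; lia.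
Qed.

Section DeltaAlongLoops.
Variable G : finType.

Lemma lcp_cat_wpow_leq (u1 u2 v1 v2 : seq G) n :
  lcp (u1 ++ wpow v1 n) (u2 ++ wpow v2 n)
    <= minn (size u1 + n * size v1) (size u2 + n * size v2).
Proof. by rewrite leq_min -!size_wpow -!size_cat lcp_leq_size lcpC lcp_leq_size. Qed.

Lemma Delta_eq_of_long_lcp (u1 u2 v1 v2 : seq G) N :
  size v1 = size v2 -> 0 < size v1 ->
  size u1 + size u2 + size v1 <= lcp (u1 ++ wpow v1 N) (u2 ++ wpow v2 N) ->
  Delta u1 u2 = Delta (u1 ++ v1) (u2 ++ v2).
Proof.
move=> eq_v v_gt0 long.
have le_lcp := lcp_cat_wpow_leq u1 u2 v1 v2 N.
have N_gt0 : 0 < N by case: N le_lcp long => //; lia.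
have [le_u|lt_u] := leqP (size u1) (size u2).
  have [||w eq_u2 ->] := eq_take_cat_wpow_conj eq_v N_gt0 le_u.
  - lia.
  - apply: take_lcp; lia.
  by rewrite eq_u2 catA !Delta_catr.
have [||w eq_u1 eq_u1v1] := eq_take_cat_wpow_conj (esym eq_v) N_gt0 (ltnW lt_u).
- lia.
- apply: take_lcp; rewrite lcpC; lia.
by rewrite eq_u1v1 eq_u1 catA !Delta_catl.
Qed.

Lemma Delta_wpow_growth (u1 u2 v1 v2 : seq G) :
  Delta u1 u2 <> Delta (u1 ++ v1) (u2 ++ v2) ->
  exists C, forall n, n <= fg_len (Delta (u1 ++ wpow v1 n) (u2 ++ wpow v2 n)) + C.
Proof.
move=> neq_Delta.
have [eq_v|neq_v] := eqVneq (size v1) (size v2); last first.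
  exists (size u1 + size u2) => n; rewrite fg_len_Delta.
  have le_lcp := lcp_cat_wpow_leq u1 u2 v1 v2 n.
  rewrite !size_cat !size_wpow.
  have : size v1 < size v2 \/ size v2 < size v1 by lia.
  by case=> lt_v; nia.
have v_gt0 : 0 < size v1.
  rewrite lt0n size_eq0; apply/eqP => v1_nil; apply: neq_Delta.
  move: eq_v; rewrite v1_nil => /esym/size0nil ->.
  by rewrite !cats0.
exists (2 * (size u1 + size u2 + size v1)) => n; rewrite fg_len_Delta.
have short : lcp (u1 ++ wpow v1 n) (u2 ++ wpow v2 n) < size u1 + size u2 + size v1.
  by rewrite ltnNge; apply/negP => /(Delta_eq_of_long_lcp eq_v v_gt0).
have le_lcp := lcp_cat_wpow_leq u1 u2 v1 v2 n.
have n_le : n <= n * size v1 by rewrite leq_pmulr.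
rewrite !size_cat !size_wpow -eq_v in le_lcp *; lia.
Qed.

End DeltaAlongLoops.

Section Runs.
Variables (Q Sigma Gamma : finType) (T : transducer Q Sigma Gamma).

Lemma run_cat p u w q u' w' r :
  run T p u w q -> run T q u' w' r -> run T p (u ++ u') (w ++ w') r.
Proof.
elim=> [//|p0 a x r0 u0 w0 q0 tr _ IHrun] run_qr.
by rewrite -catA; apply: run_cons tr _; apply: IHrun.
Qed.

Lemma run_wpow q v w k : run T q v w q -> run T q (wpow v k) (wpow w k) q.
Proof.
move=> loop; elim: k => [|k IHk]; first exact: run_nil.
exact: run_cat loop IHk.
Qed.

Lemma not_weak_twinning_witness :
  ~ weak_twinning T ->
  exists (q1 q2 : Q) (u v : seq Sigma) (u1 u2 v1 v2 : seq Gamma),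
    [/\ run T q1 u u1 q1, run T q1 v v1 q1, run T q1 u u2 q2, run T q2 v v2 q2 &
        Delta u1 u2 <> Delta (u1 ++ v1) (u2 ++ v2)].
Proof.
move=> not_twinning; apply: NNPP => no_witness; apply: not_twinning.
move=> q1 q2 u v u1 u2 v1 v2 r1 r2 r3 r4; apply: NNPP => neq_Delta.
by apply: no_witness; exists q1, q2, u, v, u1, u2, v1, v2.
Qed.

End Runs.

Theorem lemma8 (Q Sigma Gamma : finType) (T : transducer Q Sigma Gamma) :
  ~ weak_twinning T ->
  exists (q1 q2 : Q) (u v : seq Sigma) (u1 u2 v1 v2 : seq Gamma),
    [/\ run T q1 u u1 q1, run T q1 v v1 q1, run T q1 u u2 q2, run T q2 v v2 q2 &
        forall n : nat, n <= fg_len (Delta (u1 ++ wpow v1 n) (u2 ++ wpow v2 n))].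
Proof.
move=> /not_weak_twinning_witness [q1 [q2 [u [v [u1 [u2 [v1 [v2 [r1 r2 r3 r4 neq]]]]]]]]].
have [C growth] := Delta_wpow_growth neq.
exists q1, q2, u, (wpow v C.+1), u1, u2, (wpow v1 C.+1), (wpow v2 C.+1).
split => //; try exact: run_wpow.
move=> [|n] //; have := growth (n.+1 * C.+1); rewrite !wpowM; nia.
Qed.
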